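(* Let $c_1,c_3,c_5\in\mathbb{R}$ and consider the initial value problem $$\ddot u=-(c_1u+c_3u^3+c_5u^5),\qquad u(0)=1,\quad \dot u(0)=0,$$ whose solution satisfies, for $|u|\le 1$, the time-integral relation $$t=\sqrt{\tfrac32}\int_{u^2}^{1}\frac{ds}{\sqrt{s(1-s)\,h_2(s)}},\qquad h_2(s)=(6c_1+3c_3+2c_5)+(3c_3+2c_5)s+2c_5s^2 .$$ Assume $c_5>0$, $\Delta:=3c_3^2-4c_5(4c_1+c_3+c_5)>0$ and $6c_1+3c_3+2c_5>0$, and let $s_1<s_2<0$ be the two real roots of $h_2$. Define $$k^2=\frac{s_2-s_1}{s_1(s_2-1)}.$$ Then the solution $u$ of the initial value problem satisfies $$u^2(t)=s_1+\frac{s_1(s_1-1)}{\mathrm{sn}^2\!\Big(\sqrt{\tfrac{c_5\,s_1(s_2-1)}{3}}\;t,\;k\Big)-s_1}.$$ This solution is periodic with period $$\mathbb T=\frac{4\sqrt3}{\sqrt{c_5\,s_1(s_2-1)}}\,\mathbf K(k),$$ and $u(t)$ is positive for $0\le t\le \tfrac14\mathbb T$ and for $\tfrac34\mathbb T\le t\le\mathbb T$, while it is negative for $\tfrac14\mathbb T<t<\tfrac34\mathbb T$.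
   Context: $F(\varphi,k)=\int_0^{\sin\varphi}\frac{ds}{\sqrt{(1-s^2)(1-k^2s^2)}}$ is the incomplete elliptic integral of the first kind with modulus $k$; $\mathrm{am}(\cdot,k)$ is the Jacobi amplitude ($\varphi=\mathrm{am}(s,k)$ iff $s=F(\varphi,k)$); $\mathrm{sn}(s,k)=\sin(\mathrm{am}(s,k))$ is the Jacobi sine amplitude function; $\mathbf K(k)=F(\pi/2,k)$ is the complete elliptic integral of the first kind. *)

From Stdlib Require Import Reals ClassicalEpsilon.
From Coquelicot Require Import Coquelicot.
Open Scope R_scope.

(* For |phi| <= PI/2 this equals int_0^{sin phi} ds/sqrt((1-s^2)(1-k^2 s^2))
   (substitution s = sin theta); the angle form is the standard extension to
   all real phi, needed so that the amplitude am is defined on all of R. *)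
Definition EllF (phi k : R) : R :=
  RInt (fun theta => / sqrt (1 - k ^ 2 * (sin theta) ^ 2)) 0 phi.

Definition am (s k : R) : R :=
  epsilon (inhabits 0) (fun phi => EllF phi k = s).

Definition sn (s k : R) : R := sin (am s k).

Definition EllK (k : R) : R := EllF (PI / 2) k.

Definition h2 (c1 c3 c5 s : R) : R :=
  (6 * c1 + 3 * c3 + 2 * c5) + (3 * c3 + 2 * c5) * s + 2 * c5 * s ^ 2.

(* Energy conservation, rewritten with Vieta's relations for the roots of h2, reads
   3 v^2 = c5 (1 - u^2) (u^2 - s1) (u^2 - s2), so |u| <= 1.  Let
   lam = sqrt (c5 s1 (s2 - 1) / 3) and g(phi) = sqrt (-s1) cos phi / sqrt (sin^2 phi - s1).
   After the change of time t = F(phi, k) / lam, both phi |-> u (F(phi, k) / lam) and g solve the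
   same first-order system, whose coefficient dF/dphi / lam is bounded and whose nonlinearity is
   Lipschitz on [-1, 1]; Gronwall's inequality for the squared distance of the two phase curves
   makes them coincide, i.e. u t = g (am (lam t) k).  The formula for u^2 is an identity for g^2,
   and periodicity and the sign pattern come from those of cos together with
   F(phi + PI, k) = F(phi, k) + 2 K(k). *)

From Stdlib Require Import Reals Lra ClassicalEpsilon.
From Coquelicot Require Import Coquelicot.
Open Scope R_scope.

Lemma is_derive_continuity_pt (f : R -> R) (x l : R) :
  is_derive f x l -> continuity_pt f x.
Proof.
  intros H. apply derivable_continuous_pt. exists l. now apply is_derive_Reals.
Qed.

Lemma nondecreasing_of_derive_nonneg (f df : R -> R) :
  (forall x, is_derive f x (df x)) -> (forall x, 0 <= df x) ->
  forall x y, x <= y -> f x <= f y.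
Proof.
  intros Hd Hpos x y Hxy.
  destruct (MVT_gen f x y df) as [c [_ Hc]].
  - intros z _. apply Hd.
  - intros z _. eapply is_derive_continuity_pt, Hd.
  - specialize (Hpos c). nra.
Qed.

Lemma constant_of_derive_zero (f : R -> R) :
  (forall x, is_derive f x 0) -> forall x y, f x = f y.
Proof.
  intros Hd x y.
  destruct (MVT_gen f x y (fun _ => 0)) as [c [_ Hc]].
  - intros z _. apply Hd.
  - intros z _. eapply is_derive_continuity_pt, Hd.
  - lra.
Qed.

Lemma Gronwall_zero_forward (M : R) (W dW : R -> R) :
  (forall t, is_derive W t (dW t)) -> (forall t, 0 <= W t) ->
  (forall t, dW t <= M * W t) -> W 0 = 0 ->
  forall t, 0 <= t -> W t = 0.
Proof.
  intros HdW HW Hbound HW0 t Ht.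
  set (E := fun s => exp (- M * s)).
  assert (Hmono := nondecreasing_of_derive_nonneg (fun s => - (W s * E s))
                     (fun s => E s * (M * W s - dW s))).
  assert (HEt := exp_pos (- M * t)).
  assert (H : - (W 0 * E 0) <= - (W t * E t)).
  { apply Hmono; [| | exact Ht].
    - intros s. unfold E. auto_derive; [now exists (dW s) |].
      change (Derive (fun x => W x) s) with (Derive W s).
      rewrite (is_derive_unique _ _ _ (HdW s)). ring.
    - intros s. unfold E. pose proof (exp_pos (- M * s)). specialize (Hbound s). nra. }
  rewrite HW0 in H. unfold E in H. specialize (HW t). nra.
Qed.

Lemma Gronwall_zero (M : R) (W dW : R -> R) :
  (forall t, is_derive W t (dW t)) -> (forall t, 0 <= W t) ->
  (forall t, Rabs (dW t) <= M * W t) -> W 0 = 0 ->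
  forall t, W t = 0.
Proof.
  intros HdW HW Hbound HW0 t.
  destruct (Rle_or_lt 0 t) as [Ht | Ht].
  - apply (Gronwall_zero_forward M W dW); auto.
    intros s. eapply Rle_trans; [apply Rle_abs | apply Hbound].
  - replace t with (- - t) by ring.
    apply (Gronwall_zero_forward M (fun s => W (- s)) (fun s => - dW (- s))); auto; try lra.
    + intros s. replace (- dW (- s)) with (-1 * dW (- s)) by ring.
      apply (is_derive_comp W (fun s => - s)); [apply HdW |].
      apply (is_derive_opp (fun s => s) s 1), (is_derive_id (K:=R_AbsRing)).
    + intros s. eapply Rle_trans; [apply Rle_abs | rewrite Rabs_Ropp; apply Hbound].
    + now rewrite Ropp_0.
Qed.

Lemma Lipschitz_system_unique (A L : R) (alpha p X1 Y1 X2 Y2 : R -> R) :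
  0 <= L ->
  (forall t, Rabs (alpha t) <= A) ->
  (forall x y, x ^ 2 <= 1 -> y ^ 2 <= 1 -> Rabs (p x - p y) <= L * Rabs (x - y)) ->
  (forall t, is_derive X1 t (alpha t * Y1 t)) -> (forall t, is_derive Y1 t (alpha t * p (X1 t))) ->
  (forall t, is_derive X2 t (alpha t * Y2 t)) -> (forall t, is_derive Y2 t (alpha t * p (X2 t))) ->
  (forall t, X1 t ^ 2 <= 1) -> (forall t, X2 t ^ 2 <= 1) ->
  X1 0 = X2 0 -> Y1 0 = Y2 0 ->
  forall t, X1 t = X2 t.
Proof.
  intros HL Halpha Hp dX1 dY1 dX2 dY2 B1 B2 HX0 HY0 t.
  set (W := fun t => (X1 t - X2 t) ^ 2 + (Y1 t - Y2 t) ^ 2).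
  set (dW := fun t => 2 * (X1 t - X2 t) * (alpha t * (Y1 t - Y2 t))
                    + 2 * (Y1 t - Y2 t) * (alpha t * (p (X1 t) - p (X2 t)))).
  assert (HdW : forall t, is_derive W t (dW t)).
  { intros s. unfold W.
    replace (dW s) with (INR 2 * (alpha s * Y1 s - alpha s * Y2 s) * (X1 s - X2 s) ^ 1
      + INR 2 * (alpha s * p (X1 s) - alpha s * p (X2 s)) * (Y1 s - Y2 s) ^ 1)
      by (unfold dW; simpl; ring).
    apply (is_derive_plus (fun t => (X1 t - X2 t) ^ 2) (fun t => (Y1 t - Y2 t) ^ 2)).
    - apply (is_derive_pow (fun t => X1 t - X2 t)).
      exact (is_derive_minus X1 X2 s _ _ (dX1 s) (dX2 s)).
    - apply (is_derive_pow (fun t => Y1 t - Y2 t)).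
      exact (is_derive_minus Y1 Y2 s _ _ (dY1 s) (dY2 s)). }
  assert (HW : forall t, 0 <= W t).
  { intros s. unfold W. pose proof (pow2_ge_0 (X1 s - X2 s)). pose proof (pow2_ge_0 (Y1 s - Y2 s)). lra. }
  assert (Hbound : forall t, Rabs (dW t) <= A * (1 + L) * W t).
  { intros s. unfold dW, W.
    set (d := X1 s - X2 s). set (e := Y1 s - Y2 s).
    assert (Hq := Hp (X1 s) (X2 s) (B1 s) (B2 s)). fold d in Hq.
    assert (Ha := Halpha s).
    assert (Hde : 2 * (Rabs d * Rabs e) <= d ^ 2 + e ^ 2).
    { rewrite <- (pow2_abs d), <- (pow2_abs e). pose proof (pow2_ge_0 (Rabs d - Rabs e)). nra. }
    pose proof (Rabs_pos d). pose proof (Rabs_pos e). pose proof (Rabs_pos (alpha s)).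
    pose proof (Rabs_pos (p (X1 s) - p (X2 s))).
    assert (Halpha_q : Rabs (alpha s) * Rabs (p (X1 s) - p (X2 s)) <= A * (L * Rabs d))
      by (apply Rmult_le_compat; lra).
    eapply Rle_trans; [apply Rabs_triang |]. rewrite !Rabs_mult, (Rabs_pos_eq 2) by lra.
    apply Rle_trans with (A * (1 + L) * (2 * (Rabs d * Rabs e))).
    - assert (Rabs d * (Rabs (alpha s) * Rabs e) <= Rabs d * (A * Rabs e))
        by (apply Rmult_le_compat_l; nra).
      assert (Rabs e * (Rabs (alpha s) * Rabs (p (X1 s) - p (X2 s))) <= Rabs e * (A * (L * Rabs d)))
        by (apply Rmult_le_compat_l; lra).
      lra.
    - apply Rmult_le_compat_l; [nra | exact Hde]. }
  assert (HW0 : W 0 = 0) by (unfold W; rewrite HX0, HY0; ring).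
  assert (HWt := Gronwall_zero _ W dW HdW HW Hbound HW0 t).
  unfold W in HWt. pose proof (pow2_ge_0 (X1 t - X2 t)). pose proof (pow2_ge_0 (Y1 t - Y2 t)).
  nra.
Qed.

Definition force (c1 c3 c5 x : R) : R := c1 * x + c3 * x ^ 3 + c5 * x ^ 5.

Definition potential (c1 c3 c5 x : R) : R := c1 * x ^ 2 / 2 + c3 * x ^ 4 / 4 + c5 * x ^ 6 / 6.

Lemma quadratic_form_bound (x y : R) : x ^ 2 <= 1 -> y ^ 2 <= 1 -> Rabs (x ^ 2 + x * y + y ^ 2) <= 3.
Proof.
  intros Hx Hy. pose proof (pow2_ge_0 (x + y)). pose proof (pow2_ge_0 (x - y)).
  apply Rabs_le; split; nra.
Qed.

Lemma quartic_form_bound (x y : R) : x ^ 2 <= 1 -> y ^ 2 <= 1 ->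
  Rabs (x ^ 4 + x ^ 3 * y + x ^ 2 * y ^ 2 + x * y ^ 3 + y ^ 4) <= 5.
Proof.
  intros Hx Hy. pose proof (pow2_ge_0 x). pose proof (pow2_ge_0 y).
  assert ((x * y) ^ 2 <= 1) by (rewrite Rpow_mult_distr; nra).
  assert (-1 <= x * y <= 1) by nra.
  apply Rabs_le; split; nra.
Qed.

Lemma force_Lipschitz (c1 c3 c5 x y : R) : x ^ 2 <= 1 -> y ^ 2 <= 1 ->
  Rabs (force c1 c3 c5 x - force c1 c3 c5 y)
    <= (Rabs c1 + 3 * Rabs c3 + 5 * Rabs c5) * Rabs (x - y).
Proof.
  intros Hx Hy. unfold force.
  replace (c1 * x + c3 * x ^ 3 + c5 * x ^ 5 - (c1 * y + c3 * y ^ 3 + c5 * y ^ 5)) with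
    ((c1 + c3 * (x ^ 2 + x * y + y ^ 2)
      + c5 * (x ^ 4 + x ^ 3 * y + x ^ 2 * y ^ 2 + x * y ^ 3 + y ^ 4)) * (x - y)) by ring.
  rewrite Rabs_mult. apply Rmult_le_compat_r; [apply Rabs_pos |].
  eapply Rle_trans; [apply Rabs_triang |].
  eapply Rle_trans; [apply Rplus_le_compat_r, Rabs_triang |].
  rewrite !Rabs_mult.
  pose proof (quadratic_form_bound x y Hx Hy). pose proof (quartic_form_bound x y Hx Hy).
  pose proof (Rabs_pos c3). pose proof (Rabs_pos c5).
  pose proof (Rabs_pos (x ^ 2 + x * y + y ^ 2)).
  pose proof (Rabs_pos (x ^ 4 + x ^ 3 * y + x ^ 2 * y ^ 2 + x * y ^ 3 + y ^ 4)).
  nra.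
Qed.

Lemma h2_Vieta (c1 c3 c5 s1 s2 : R) : s1 <> s2 ->
  h2 c1 c3 c5 s1 = 0 -> h2 c1 c3 c5 s2 = 0 ->
  3 * c3 + 2 * c5 = - 2 * c5 * (s1 + s2) /\ 6 * c1 + 3 * c3 + 2 * c5 = 2 * c5 * s1 * s2.
Proof.
  intros Hne H1 H2. unfold h2 in H1, H2.
  assert (Hsum : 3 * c3 + 2 * c5 = - 2 * c5 * (s1 + s2)).
  { apply (Rmult_eq_reg_l (s1 - s2)); [nra | lra]. }
  split; [exact Hsum | nra].
Qed.

Lemma energy_conserved (c1 c3 c5 : R) (u v : R -> R) :
  (forall t, is_derive u t (v t)) ->
  (forall t, is_derive v t (- force c1 c3 c5 (u t))) ->
  forall t, potential c1 c3 c5 (u t) + v t ^ 2 / 2 = potential c1 c3 c5 (u 0) + v 0 ^ 2 / 2.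
Proof.
  intros Hu Hv t.
  apply (constant_of_derive_zero (fun t => potential c1 c3 c5 (u t) + v t ^ 2 / 2)).
  intros s. unfold potential.
  auto_derive; [repeat split; [exists (v s) .. | exists (- force c1 c3 c5 (u s))]; auto |].
  change (Derive (fun x => u x) s) with (Derive u s). change (Derive (fun x => v x) s) with (Derive v s).
  rewrite (is_derive_unique _ _ _ (Hu s)), (is_derive_unique _ _ _ (Hv s)).
  unfold force. field.
Qed.

Lemma oscillator_amplitude_le1 (c1 c3 c5 s1 s2 : R) (u v : R -> R) :
  0 < c5 -> s1 <= 1 -> s2 <= 1 ->
  3 * c3 + 2 * c5 = - 2 * c5 * (s1 + s2) -> 6 * c1 + 3 * c3 + 2 * c5 = 2 * c5 * s1 * s2 ->
  (forall t, is_derive u t (v t)) ->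
  (forall t, is_derive v t (- force c1 c3 c5 (u t))) ->
  u 0 = 1 -> v 0 = 0 ->
  forall t, u t ^ 2 <= 1.
Proof.
  intros Hc5 Hs1 Hs2 Hsum Hprod Hu Hv Hu0 Hv0 t.
  assert (HE := energy_conserved c1 c3 c5 u v Hu Hv t).
  rewrite Hu0, Hv0 in HE. unfold potential in HE.
  assert (Hw : 3 * v t ^ 2 = c5 * (1 - u t ^ 2) * (u t ^ 2 - s1) * (u t ^ 2 - s2)).
  { replace c3 with ((- 2 * c5 * (s1 + s2) - 2 * c5) / 3) in HE by lra.
    replace c1 with ((2 * c5 * s1 * s2 + 2 * c5 * (s1 + s2)) / 6) in HE by lra.
    replace (u t ^ 4) with ((u t ^ 2) ^ 2) in HE by ring.
    replace (u t ^ 6) with ((u t ^ 2) ^ 3) in HE by ring.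
    lra. }
  destruct (Rle_or_lt (u t ^ 2) 1) as [| Hgt]; [assumption | exfalso].
  assert (0 < c5 * (u t ^ 2 - s1) * (u t ^ 2 - s2)) by (apply Rmult_lt_0_compat; [apply Rmult_lt_0_compat |]; lra).
  pose proof (pow2_ge_0 (v t)). nra.
Qed.

Lemma sin_sqr_le1 (x : R) : sin x ^ 2 <= 1.
Proof. pose proof (sin2_cos2 x). pose proof (pow2_ge_0 (cos x)). unfold Rsqr in *. nra. Qed.

Definition ell_integrand (k theta : R) : R := / sqrt (1 - k ^ 2 * sin theta ^ 2).

Lemma ell_integrand_add_PI (k theta : R) : ell_integrand k (theta + PI) = ell_integrand k theta.
Proof. unfold ell_integrand. rewrite neg_sin. do 3 f_equal. ring. Qed.

Lemma ell_integrand_PI_sub (k theta : R) : ell_integrand k (PI - theta) = ell_integrand k theta.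
Proof. unfold ell_integrand. now rewrite sin_PI_x. Qed.

Section EllipticIntegral.

Variable k : R.
Hypothesis Hk : k ^ 2 < 1.

Lemma ell_radicand_pos (theta : R) : 0 < 1 - k ^ 2 * sin theta ^ 2.
Proof. pose proof (sin_sqr_le1 theta). pose proof (pow2_ge_0 k). pose proof (pow2_ge_0 (sin theta)). nra. Qed.

Lemma ell_integrand_ge1 (theta : R) : 1 <= ell_integrand k theta.
Proof.
  unfold ell_integrand. pose proof (ell_radicand_pos theta).
  assert (0 <= k ^ 2 * sin theta ^ 2) by (apply Rmult_le_pos; apply pow2_ge_0).
  assert (sqrt (1 - k ^ 2 * sin theta ^ 2) <= 1).
  { apply Rle_trans with (sqrt 1); [apply sqrt_le_1_alt; lra | rewrite sqrt_1; lra]. }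
  apply Rle_trans with (/ 1); [lra |]. apply Rinv_le_contravar; [apply sqrt_lt_R0|]; lra.
Qed.

Lemma ell_integrand_le (theta : R) : ell_integrand k theta <= / sqrt (1 - k ^ 2).
Proof.
  unfold ell_integrand. pose proof (sin_sqr_le1 theta). pose proof (pow2_ge_0 k).
  apply Rinv_le_contravar; [apply sqrt_lt_R0; lra |]. apply sqrt_le_1_alt. nra.
Qed.

Lemma ell_integrand_continuous (theta : R) : continuous (ell_integrand k) theta.
Proof.
  apply (ex_derive_continuous (K := R_AbsRing) (V := R_NormedModule)).
  pose proof (ell_radicand_pos theta). unfold ell_integrand. auto_derive.
  replace (sin theta * (sin theta * 1)) with (sin theta ^ 2) by ring.
  split; [lra | split; [| exact I]]. apply Rgt_not_eq, sqrt_lt_R0. lra.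
Qed.

Lemma is_derive_EllF (phi : R) : is_derive (fun phi => EllF phi k) phi (ell_integrand k phi).
Proof.
  apply (is_derive_RInt (ell_integrand k) (fun phi => EllF phi k) 0 phi).
  - apply filter_forall. intros b. apply (RInt_correct (V := R_CompleteNormedModule)).
    apply (ex_RInt_continuous (V := R_CompleteNormedModule)). intros; apply ell_integrand_continuous.
  - apply ell_integrand_continuous.
Qed.

Lemma EllF_increasing (x y : R) : x < y -> EllF x k < EllF y k.
Proof.
  intros Hxy.
  apply (incr_function (fun phi => EllF phi k) m_infty p_infty (ell_integrand k)); try easy.
  - intros; apply is_derive_EllF.
  - intros z _ _. pose proof (ell_integrand_ge1 z). lra.
Qed.

Lemma EllF_le_iff (x y : R) : EllF x k <= EllF y k <-> x <= y.
Proof.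
  split; intros H.
  - destruct (Rle_or_lt x y) as [| Hlt]; [assumption |].
    pose proof (EllF_increasing y x Hlt). lra.
  - destruct H as [Hlt | ->]; [left; now apply EllF_increasing | lra].
Qed.

Lemma EllF_lt_iff (x y : R) : EllF x k < EllF y k <-> x < y.
Proof.
  split; [| apply EllF_increasing].
  intros H. destruct (Rlt_or_le x y) as [| Hle]; [assumption |].
  apply EllF_le_iff in Hle. lra.
Qed.

Lemma EllF_inj (x y : R) : EllF x k = EllF y k -> x = y.
Proof.
  intros H. apply Rle_antisym; apply EllF_le_iff; lra.
Qed.

Lemma EllF_0 : EllF 0 k = 0.
Proof. unfold EllF. now rewrite RInt_point. Qed.

Lemma EllF_surjective (s : R) : exists phi, EllF phi k = s.
Proof.
  assert (Hdom : forall x y, x <= y -> EllF x k - x <= EllF y k - y).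
  { apply (nondecreasing_of_derive_nonneg (fun phi => EllF phi k - phi)
                                          (fun phi => ell_integrand k phi - 1)).
    - intros phi. apply (is_derive_minus (fun phi => EllF phi k) (fun phi => phi)).
      + apply is_derive_EllF.
      + apply (is_derive_id (K := R_AbsRing)).
    - intros phi. pose proof (ell_integrand_ge1 phi). lra. }
  pose proof (Rabs_pos s). pose proof (Rle_abs s). pose proof (Rle_abs (- s)). rewrite Rabs_Ropp in *.
  assert (Hhi := Hdom 0 (Rabs s) ltac:(lra)).
  assert (Hlo := Hdom (- Rabs s) 0 ltac:(lra)).
  rewrite EllF_0 in Hhi, Hlo.
  destruct (IVT_gen (fun phi => EllF phi k) (- Rabs s) (Rabs s) s) as [phi [_ Hphi]].
  - intros phi. eapply is_derive_continuity_pt, is_derive_EllF.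
  - rewrite Rmin_left, Rmax_right by lra. lra.
  - now exists phi.
Qed.

Lemma EllF_PI : EllF PI k = 2 * EllK k.
Proof.
  assert (Hc := constant_of_derive_zero (fun phi => EllF phi k + EllF (PI - phi) k)).
  assert (H : EllF (PI / 2) k + EllF (PI - PI / 2) k = EllF 0 k + EllF (PI - 0) k).
  { apply Hc. intros phi.
    replace 0 with (ell_integrand k phi + -1 * ell_integrand k (PI - phi))
      by (rewrite ell_integrand_PI_sub; ring).
    apply (is_derive_plus (fun phi => EllF phi k) (fun phi => EllF (PI - phi) k)).
    - apply is_derive_EllF.
    - apply (is_derive_comp (fun phi => EllF phi k) (fun phi => PI - phi)); [apply is_derive_EllF |].
      auto_derive; [exact I | ring]. }
  replace (PI - PI / 2) with (PI / 2) in H by field. rewrite Rminus_0_r, EllF_0 in H.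
  unfold EllK. lra.
Qed.

Lemma EllF_add_PI (phi : R) : EllF (phi + PI) k = EllF phi k + 2 * EllK k.
Proof.
  assert (H : EllF (phi + PI) k - EllF phi k = EllF (0 + PI) k - EllF 0 k).
  { apply (constant_of_derive_zero (fun phi => EllF (phi + PI) k - EllF phi k)). intros x.
    replace 0 with (1 * ell_integrand k (x + PI) - ell_integrand k x)
      by (rewrite ell_integrand_add_PI; ring).
    apply (is_derive_minus (fun phi => EllF (phi + PI) k) (fun phi => EllF phi k));
      [| apply is_derive_EllF].
    apply (is_derive_comp (fun phi => EllF phi k) (fun phi => phi + PI)); [apply is_derive_EllF |].
    auto_derive; [exact I | ring]. }
  rewrite Rplus_0_l, EllF_0, EllF_PI in H. lra.
Qed.

Lemma EllF_am (s : R) : EllF (am s k) k = s.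
Proof.
  unfold am. apply epsilon_spec. apply EllF_surjective.
Qed.

Lemma am_EllF (phi : R) : am (EllF phi k) k = phi.
Proof. apply EllF_inj. apply EllF_am. Qed.

Lemma am_add_4K (s : R) : am (s + 4 * EllK k) k = am s k + 2 * PI.
Proof.
  rewrite <- (EllF_am s) at 1.
  replace (am s k + 2 * PI) with (am s k + PI + PI) by ring.
  rewrite <- am_EllF, !EllF_add_PI. f_equal. ring.
Qed.

Lemma EllF_3PI_2 : EllF (3 * (PI / 2)) k = 3 * EllK k.
Proof.
  replace (3 * (PI / 2)) with (PI / 2 + PI) by field. rewrite EllF_add_PI. unfold EllK. ring.
Qed.

Lemma EllF_2PI : EllF (2 * PI) k = 4 * EllK k.
Proof.
  replace (2 * PI) with (0 + PI + PI) by ring. rewrite !EllF_add_PI, EllF_0. ring.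
Qed.

Lemma cos_am_nonneg (s : R) :
  0 <= s <= EllK k \/ 3 * EllK k <= s <= 4 * EllK k -> 0 <= cos (am s k).
Proof.
  pose proof PI_RGT_0.
  intros [[H0 H1] | [H3 H4]].
  - assert (0 <= am s k) by (apply EllF_le_iff; now rewrite EllF_0, EllF_am).
    assert (am s k <= PI / 2) by (apply EllF_le_iff; now rewrite EllF_am).
    apply cos_ge_0; lra.
  - apply cos_ge_0_3PI2; apply EllF_le_iff; now rewrite EllF_am, ?EllF_3PI_2, ?EllF_2PI.
Qed.

Lemma cos_am_neg (s : R) : EllK k < s < 3 * EllK k -> cos (am s k) < 0.
Proof.
  intros [H1 H3].
  apply cos_lt_0; apply EllF_lt_iff; now rewrite EllF_am, ?EllF_3PI_2.
Qed.

End EllipticIntegral.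

Definition pos_profile (s1 phi : R) : R := sqrt (- s1) * cos phi / sqrt (sin phi ^ 2 - s1).

(* [d pos_profile / dphi * dphi/dt] with [dphi/dt = lam * sqrt (1 - k^2 sin^2 phi)] for
   [phi = am (lam t) k]: the velocity along the solution. *)
Definition vel_profile (s1 k lam phi : R) : R :=
  - lam * sqrt (- s1) * (1 - s1) * sin phi * sqrt (1 - k ^ 2 * sin phi ^ 2)
    / ((sin phi ^ 2 - s1) * sqrt (sin phi ^ 2 - s1)).

Section Profile.

Variables (s1 k lam : R).
Hypotheses (Hs1 : s1 < 0) (Hk : k ^ 2 < 1) (Hlam : 0 < lam).

Lemma is_derive_pos_profile (phi : R) :
  is_derive (pos_profile s1) phi (ell_integrand k phi / lam * vel_profile s1 k lam phi).
Proof.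
  unfold pos_profile, vel_profile, ell_integrand.
  pose proof (sin_sqr_le1 phi). pose proof (pow2_ge_0 (sin phi)). pose proof (pow2_ge_0 k).
  assert (HQ : 0 < sin phi ^ 2 - s1) by lra.
  assert (HD : 0 < 1 - k ^ 2 * sin phi ^ 2) by nra.
  assert (Hr : 0 < sqrt (sin phi ^ 2 - s1)) by (apply sqrt_lt_R0; lra).
  assert (Hr2 := sqrt_sqrt (sin phi ^ 2 - s1) ltac:(lra)).
  assert (Hd : 0 < sqrt (1 - k ^ 2 * sin phi ^ 2)) by (apply sqrt_lt_R0; lra).
  assert (HCS := sin2_cos2 phi). unfold Rsqr in HCS.
  auto_derive; replace (sin phi * (sin phi * 1) + - s1) with (sin phi ^ 2 - s1) by ring.
  - repeat split; lra.
  - set (r := sqrt (sin phi ^ 2 - s1)) in *. set (S := sin phi) in *. set (C := cos phi) in *.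
    set (D := sqrt (1 - k ^ 2 * S ^ 2)) in *.
    field_simplify_eq; [| repeat split; lra].
    clearbody r S C D.
    replace (r ^ 4) with ((S ^ 2 - s1) ^ 2) by nra.
    replace (r ^ 2) with (S ^ 2 - s1) by nra.
    replace (C ^ 2) with (1 - S ^ 2) by nra.
    ring.
Qed.

Lemma is_derive_vel_profile (c1 c3 c5 s2 phi : R) :
  s2 <> 1 ->
  3 * c3 + 2 * c5 = - 2 * c5 * (s1 + s2) -> 6 * c1 + 3 * c3 + 2 * c5 = 2 * c5 * s1 * s2 ->
  3 * lam ^ 2 = c5 * s1 * (s2 - 1) -> k ^ 2 * (s1 * (s2 - 1)) = s2 - s1 ->
  is_derive (vel_profile s1 k lam) phi
    (ell_integrand k phi / lam * - force c1 c3 c5 (pos_profile s1 phi)).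
Proof.
  intros Hs2 Hsum Hprod Hlam2 Hk2.
  unfold vel_profile, pos_profile, ell_integrand, force.
  pose proof (sin_sqr_le1 phi). pose proof (pow2_ge_0 (sin phi)). pose proof (pow2_ge_0 k).
  assert (HQ : 0 < sin phi ^ 2 - s1) by lra.
  assert (HD : 0 < 1 - k ^ 2 * sin phi ^ 2) by nra.
  assert (Hr : 0 < sqrt (sin phi ^ 2 - s1)) by (apply sqrt_lt_R0; lra).
  assert (Hr2 := sqrt_sqrt (sin phi ^ 2 - s1) ltac:(lra)).
  assert (Hd : 0 < sqrt (1 - k ^ 2 * sin phi ^ 2)) by (apply sqrt_lt_R0; lra).
  assert (Hd2 := sqrt_sqrt (1 - k ^ 2 * sin phi ^ 2) ltac:(lra)).
  assert (Ha2 := sqrt_sqrt (- s1) ltac:(lra)).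
  assert (HCS := sin2_cos2 phi). unfold Rsqr in HCS.
  auto_derive; replace (sin phi * (sin phi * 1) + - s1) with (sin phi ^ 2 - s1) by ring;
    replace (1 + - (k * (k * 1) * (sin phi * (sin phi * 1)))) with (1 - k ^ 2 * sin phi ^ 2) by ring.
  - repeat split; try lra. apply Rgt_not_eq, Rmult_lt_0_compat; lra.
  - set (r := sqrt (sin phi ^ 2 - s1)) in *. set (S := sin phi) in *. set (C := cos phi) in *.
    set (sa := sqrt (- s1)) in *. set (D := sqrt (1 - k ^ 2 * S ^ 2)) in *.
    field_simplify_eq; [| repeat split; lra].
    clearbody r S C sa D.
    assert (Hm : s1 * (s2 - 1) <> 0) by (apply Rmult_integral_contrapositive; split; lra).
    assert (Ek : k ^ 2 = (s2 - s1) / (s1 * (s2 - 1))) by (field_simplify_eq; lra).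
    assert (E3 : c3 = (- 2 * c5 * (s1 + s2) - 2 * c5) / 3) by lra.
    assert (E1 : c1 = (2 * c5 * s1 * s2 + 2 * c5 * (s1 + s2)) / 6) by lra.
    assert (El : lam ^ 2 = c5 * s1 * (s2 - 1) / 3) by lra.
    assert (HC2 : C ^ 2 = 1 - S ^ 2) by nra.
    repeat match goal with
    | |- context [r ^ 4] => replace (r ^ 4) with ((S ^ 2 - s1) ^ 2) by nra
    | |- context [r ^ 3] => replace (r ^ 3) with ((S ^ 2 - s1) * r) by nra
    | |- context [r ^ 2] => replace (r ^ 2) with (S ^ 2 - s1) by nra
    | |- context [D ^ 2] => replace (D ^ 2) with (1 - k ^ 2 * S ^ 2) by nra
    | |- context [D ^ 3] => replace (D ^ 3) with ((1 - k ^ 2 * S ^ 2) * D) by nra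
    | |- context [sa ^ 5] => replace (sa ^ 5) with (s1 ^ 2 * sa) by nra
    | |- context [sa ^ 3] => replace (sa ^ 3) with (- s1 * sa) by nra
    | |- context [sa ^ 2] => replace (sa ^ 2) with (- s1) by nra
    | |- context [C ^ 5] => replace (C ^ 5) with ((C ^ 2) ^ 2 * C) by ring
    | |- context [C ^ 3] => replace (C ^ 3) with (C ^ 2 * C) by ring
    | |- context [C ^ 2] => rewrite HC2
    | |- context [lam ^ 2] => rewrite El
    end.
    rewrite Ek, E1, E3. field. lra.
Qed.
End Profile.


Section ProfileValues.

Variable s1 : R.
Hypothesis Hs1 : s1 < 0.

Lemma pos_profile_sqr (phi : R) :
  pos_profile s1 phi ^ 2 = s1 + s1 * (s1 - 1) / (sin phi ^ 2 - s1).
Proof.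
  unfold pos_profile. pose proof (pow2_ge_0 (sin phi)).
  assert (HCS := sin2_cos2 phi). unfold Rsqr in HCS.
  replace ((sqrt (- s1) * cos phi / sqrt (sin phi ^ 2 - s1)) ^ 2) with
    (sqrt (- s1) ^ 2 * cos phi ^ 2 / sqrt (sin phi ^ 2 - s1) ^ 2)
    by (field; apply Rgt_not_eq, sqrt_lt_R0; lra).
  rewrite !pow2_sqrt by lra.
  replace (cos phi ^ 2) with (1 - sin phi ^ 2) by nra.
  field. lra.
Qed.

Lemma pos_profile_sqr_le1 (phi : R) : pos_profile s1 phi ^ 2 <= 1.
Proof.
  rewrite pos_profile_sqr. pose proof (pow2_ge_0 (sin phi)).
  assert (s1 * (s1 - 1) / (sin phi ^ 2 - s1) <= s1 * (s1 - 1) / - s1).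
  { apply Rmult_le_compat_l; [nra |]. apply Rinv_le_contravar; lra. }
  replace (s1 * (s1 - 1) / - s1) with (1 - s1) in * by (field; lra).
  lra.
Qed.

Lemma pos_profile_0 : pos_profile s1 0 = 1.
Proof.
  unfold pos_profile. rewrite sin_0, cos_0.
  replace (0 ^ 2 - s1) with (- s1) by ring. field. apply Rgt_not_eq, sqrt_lt_R0. lra.
Qed.

Lemma pos_profile_nonneg (phi : R) : 0 <= cos phi -> 0 <= pos_profile s1 phi.
Proof.
  intros Hc. unfold pos_profile. pose proof (pow2_ge_0 (sin phi)).
  apply Rmult_le_pos; [apply Rmult_le_pos; [apply sqrt_pos | lra] |].
  left. apply Rinv_0_lt_compat, sqrt_lt_R0. lra.
Qed.

Lemma pos_profile_neg (phi : R) : cos phi < 0 -> pos_profile s1 phi < 0.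
Proof.
  intros Hc. unfold pos_profile. pose proof (pow2_ge_0 (sin phi)).
  assert (0 < sqrt (- s1)) by (apply sqrt_lt_R0; lra).
  assert (0 < / sqrt (sin phi ^ 2 - s1)) by (apply Rinv_0_lt_compat, sqrt_lt_R0; lra).
  unfold Rdiv. replace (sqrt (- s1) * cos phi * / sqrt (sin phi ^ 2 - s1)) with
    (cos phi * (sqrt (- s1) * / sqrt (sin phi ^ 2 - s1))) by ring.
  apply Rmult_neg_pos; [lra | now apply Rmult_lt_0_compat].
Qed.

End ProfileValues.

Lemma pos_profile_add_2PI (s1 phi : R) : pos_profile s1 (phi + 2 * PI) = pos_profile s1 phi.
Proof.
  unfold pos_profile.
  rewrite sin_plus, cos_plus, sin_2PI, cos_2PI. f_equal; [| do 3 f_equal]; ring.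
Qed.

Lemma vel_profile_0 (s1 k lam : R) : vel_profile s1 k lam 0 = 0.
Proof. unfold vel_profile. rewrite sin_0. unfold Rdiv. ring. Qed.

Lemma sqrt_third_mul_period (c K : R) : 0 < c -> sqrt (c / 3) * (4 * sqrt 3 / sqrt c * K) = 4 * K.
Proof.
  intros Hc. assert (0 < sqrt c) by (apply sqrt_lt_R0; lra).
  replace (sqrt (c / 3) * (4 * sqrt 3 / sqrt c * K)) with (sqrt (c / 3) * sqrt 3 * 4 * K / sqrt c)
    by (field; lra).
  rewrite <- sqrt_mult by lra. replace (c / 3 * 3) with c by field. field. lra.
Qed.

Lemma modulus_sqr_mul (s1 s2 : R) : s1 < s2 -> s2 < 0 ->
  sqrt ((s2 - s1) / (s1 * (s2 - 1))) ^ 2 * (s1 * (s2 - 1)) = s2 - s1.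
Proof.
  intros H12 H2. assert (0 < s1 * (s2 - 1)) by nra.
  rewrite pow2_sqrt; [field; lra |]. apply Rdiv_le_0_compat; lra.
Qed.

Lemma modulus_sqr_lt1 (s1 s2 : R) : s1 < s2 -> s2 < 0 -> sqrt ((s2 - s1) / (s1 * (s2 - 1))) ^ 2 < 1.
Proof.
  intros H12 H2. assert (0 < s1 * (s2 - 1)) by nra.
  pose proof (modulus_sqr_mul s1 s2 H12 H2). nra.
Qed.

Lemma oscillator_solution_am (c1 c3 c5 s1 s2 : R) (u v : R -> R) :
  0 < c5 -> s1 < s2 -> s2 < 0 ->
  3 * c3 + 2 * c5 = - 2 * c5 * (s1 + s2) -> 6 * c1 + 3 * c3 + 2 * c5 = 2 * c5 * s1 * s2 ->
  (forall t, is_derive u t (v t)) ->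
  (forall t, is_derive v t (- force c1 c3 c5 (u t))) ->
  u 0 = 1 -> v 0 = 0 ->
  forall t, u t = pos_profile s1 (am (sqrt (c5 * s1 * (s2 - 1) / 3) * t)
                                      (sqrt ((s2 - s1) / (s1 * (s2 - 1))))).
Proof.
  intros Hc5 H12 H2 Hsum Hprod Hu Hv Hu0 Hv0.
  set (k := sqrt ((s2 - s1) / (s1 * (s2 - 1)))).
  set (lam := sqrt (c5 * s1 * (s2 - 1) / 3)).
  assert (Hk2 : k ^ 2 * (s1 * (s2 - 1)) = s2 - s1) by now apply modulus_sqr_mul.
  assert (Hk : k ^ 2 < 1) by now apply modulus_sqr_lt1.
  assert (Hc : 0 < c5 * s1 * (s2 - 1)) by (rewrite Rmult_assoc; apply Rmult_lt_0_compat; nra).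
  assert (Hlam : 0 < lam) by (apply sqrt_lt_R0; lra).
  assert (Hlam2 : 3 * lam ^ 2 = c5 * s1 * (s2 - 1)) by (unfold lam; rewrite pow2_sqrt; lra).
  set (tau := fun phi => EllF phi k / lam).
  assert (Htau : forall phi, is_derive tau phi (ell_integrand k phi / lam)).
  { intros phi.
    exact (is_derive_scal_l (fun phi => EllF phi k) phi _ (/ lam) (is_derive_EllF k Hk phi)). }
  assert (Hrep : forall phi, u (tau phi) = pos_profile s1 phi).
  { apply (Lipschitz_system_unique (/ sqrt (1 - k ^ 2) / lam) (Rabs c1 + 3 * Rabs c3 + 5 * Rabs c5)
      (fun phi => ell_integrand k phi / lam) (fun x => - force c1 c3 c5 x)
      (fun phi => u (tau phi)) (fun phi => v (tau phi)) (pos_profile s1) (vel_profile s1 k lam)).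
    - pose proof (Rabs_pos c1). pose proof (Rabs_pos c3). pose proof (Rabs_pos c5). lra.
    - intros phi. pose proof (ell_integrand_ge1 k Hk phi). pose proof (ell_integrand_le k Hk phi).
      rewrite Rabs_pos_eq; unfold Rdiv.
      + apply Rmult_le_compat_r; [left; now apply Rinv_0_lt_compat | assumption].
      + apply Rmult_le_pos; [lra | left; now apply Rinv_0_lt_compat].
    - intros x y Hx Hy. replace (- force c1 c3 c5 x - - force c1 c3 c5 y)
        with (- (force c1 c3 c5 x - force c1 c3 c5 y)) by ring.
      rewrite Rabs_Ropp. now apply force_Lipschitz.
    - intros phi. apply (is_derive_comp u tau); [apply Hu | apply Htau].
    - intros phi. apply (is_derive_comp v tau); [apply Hv | apply Htau].
    - intros phi. apply is_derive_pos_profile; lra.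
    - intros phi. apply is_derive_vel_profile with (s2 := s2); lra.
    - intros phi. apply (oscillator_amplitude_le1 c1 c3 c5 s1 s2 u v); auto; lra.
    - intros phi. apply pos_profile_sqr_le1; lra.
    - unfold tau. rewrite EllF_0, Rdiv_0_l, Hu0, pos_profile_0; lra.
    - unfold tau. rewrite EllF_0, Rdiv_0_l, Hv0, vel_profile_0. reflexivity. }
  intros t. rewrite <- Hrep. unfold tau. rewrite EllF_am by assumption. f_equal. field. lra.
Qed.

Theorem theorem2 (c1 c3 c5 s1 s2 : R) (u v : R -> R)
  (Hc5 : 0 < c5)
  (HDelta : 0 < 3 * c3 ^ 2 - 4 * c5 * (4 * c1 + c3 + c5))
  (Hh0 : 0 < 6 * c1 + 3 * c3 + 2 * c5)
  (Hs12 : s1 < s2) (Hs2 : s2 < 0)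
  (Hr1 : h2 c1 c3 c5 s1 = 0) (Hr2 : h2 c1 c3 c5 s2 = 0)
  (Hu' : forall t, is_derive u t (v t))
  (Hv' : forall t, is_derive v t (- (c1 * u t + c3 * (u t) ^ 3 + c5 * (u t) ^ 5)))
  (Hu0 : u 0 = 1) (Hv0 : v 0 = 0) :
  let k := sqrt ((s2 - s1) / (s1 * (s2 - 1))) in
  let T := 4 * sqrt 3 / sqrt (c5 * s1 * (s2 - 1)) * EllK k in
  (forall t, (u t) ^ 2 =
     s1 + s1 * (s1 - 1) /
            ((sn (sqrt (c5 * s1 * (s2 - 1) / 3) * t) k) ^ 2 - s1)) /\
  (forall t, u (t + T) = u t) /\
  (forall t, (0 <= t <= T / 4 \/ 3 * T / 4 <= t <= T) -> 0 <= u t) /\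
  (forall t, T / 4 < t < 3 * T / 4 -> u t < 0).
Proof.
  (* [HDelta] and [Hh0] follow from the existence of the roots [s1 < s2 < 0]. *)
  intros k T.
  destruct (h2_Vieta c1 c3 c5 s1 s2 ltac:(lra) Hr1 Hr2) as [Hsum Hprod].
  assert (Hrep := oscillator_solution_am c1 c3 c5 s1 s2 u v Hc5 Hs12 Hs2 Hsum Hprod Hu' Hv' Hu0 Hv0).
  set (lam := sqrt (c5 * s1 * (s2 - 1) / 3)) in Hrep. fold k in Hrep.
  assert (Hk : k ^ 2 < 1) by now apply modulus_sqr_lt1.
  assert (Hc : 0 < c5 * s1 * (s2 - 1)) by (rewrite Rmult_assoc; apply Rmult_lt_0_compat; nra).
  assert (Hlam : 0 < lam) by (apply sqrt_lt_R0; lra).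
  assert (HT : lam * T = 4 * EllK k) by now apply sqrt_third_mul_period.
  split; [| split; [| split]].
  - intros t. rewrite Hrep, pos_profile_sqr by lra. reflexivity.
  - intros t. rewrite !Hrep, Rmult_plus_distr_l, HT, am_add_4K by assumption.
    apply pos_profile_add_2PI.
  - intros t Ht. rewrite Hrep. apply pos_profile_nonneg; [lra |].
    apply cos_am_nonneg; [assumption |]. destruct Ht; [left | right]; nra.
  - intros t Ht. rewrite Hrep. apply pos_profile_neg; [lra |].
    apply cos_am_neg; [assumption | nra].
Qed.
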